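(* Let $\beta_{ij}$ ($i\neq j$, $i,j=1,\dots,N$) be smooth functions of $\boldsymbol u=(u_1,\dots,u_N)$ satisfying the Lamé equations $$\frac{\partial\beta_{ij}}{\partial u_k}=\beta_{ik}\beta_{kj}\ (i,j,k \text{ distinct}),\qquad \frac{\partial\beta_{ij}}{\partial u_i}+\frac{\partial\beta_{ji}}{\partial u_j}+\sum_{k\neq i,j}\beta_{ki}\beta_{kj}=0\ (i\neq j).$$ Let $\boldsymbol\xi_i$ ($\mathbb R^M$-valued) and $\boldsymbol\zeta_i$ ($\mathbb R^L$-valued), $i=1,\dots,N$, satisfy $\frac{\partial\boldsymbol\xi_j}{\partial u_i}=\beta_{ji}\boldsymbol\xi_i$ and $\frac{\partial\boldsymbol\zeta_j}{\partial u_i}=\beta_{ji}\boldsymbol\zeta_i$ for $i\neq j$, and set $$\boldsymbol\xi^*_i=\Big(\frac{\partial\boldsymbol\xi_i}{\partial u_i}+\sum_{k\neq i}\boldsymbol\xi_k\beta_{ki}\Big)^{T},\qquad \boldsymbol\zeta^*_i=\Big(\frac{\partial\boldsymbol\zeta_i}{\partial u_i}+\sum_{k\neq i}\boldsymbol\zeta_k\beta_{ki}\Big)^{T}.$$ Let $\Omega(\boldsymbol\xi,\boldsymbol\zeta^* )$ be an $M\times L$ matrix function and $\Omega(\boldsymbol\zeta,\boldsymbol\xi^* )$ an $L\times M$ matrix function with $\frac{\partial\Omega(\boldsymbol\xi,\boldsymbol\zeta^* )}{\partial u_i}=\boldsymbol\xi_i\boldsymbol\zeta^*_i$ and $\frac{\partial\Omega(\boldsymbol\zeta,\boldsymbol\xi^*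 )}{\partial u_i}=\boldsymbol\zeta_i\boldsymbol\xi^*_i$ for all $i$. Then for every $i=1,\dots,N$, $$\frac{\partial}{\partial u_i}\Big(\Omega(\boldsymbol\xi,\boldsymbol\zeta^* )+\Omega(\boldsymbol\zeta,\boldsymbol\xi^* )^{T}-\sum_{k=1}^N\boldsymbol\xi_k\boldsymbol\zeta_k^{T}\Big)=0.$$
   Context: Vectors are columns, starred quantities are row vectors, ${}^T$ is transpose, and products such as $\boldsymbol\xi_i\boldsymbol\zeta^*_i$ denote the outer (column times row) product. All functions are smooth on an open domain of $\mathbb R^N$. *)

From HB Require Import structures.
From mathcomp Require Import all_boot all_order all_algebra.
From mathcomp Require Import all_classical all_reals all_analysis.
Set Implicit Arguments. Unset Strict Implicit. Unset Printing Implicit Defensive.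
Import Order.TTheory GRing.Theory Num.Theory.
Import numFieldNormedType.Exports.
Local Open Scope classical_set_scope.
Local Open Scope ring_scope.

Definition ev {R : realType} {N : nat} (i : 'I_N) : 'rV[R]_N := delta_mx 0 i.

Definition partial {R : realType} {N : nat} {V : normedModType R}
  (i : 'I_N) (f : 'rV[R]_N -> V) : 'rV[R]_N -> V :=
  fun u => 'D_(ev i) f u.

Fixpoint iter_partial {R : realType} {N : nat} {V : normedModType R}
  (l : seq 'I_N) (f : 'rV[R]_N -> V) : 'rV[R]_N -> V :=
  match l with
  | [::] => f
  | i :: l' => partial i (iter_partial l' f)
  end.

Definition smooth_on {R : realType} {N : nat} {V : normedModType R}
  (D : set 'rV[R]_N) (f : 'rV[R]_N -> V) : Prop :=
  forall (l : seq 'I_N) (u : 'rV[R]_N), D u -> differentiable (iter_partial l f) u.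

Definition starv {R : realType} {N M : nat}
  (beta : 'I_N -> 'I_N -> 'rV[R]_N -> R) (xi : 'I_N -> 'rV[R]_N -> 'cV[R]_M)
  (i : 'I_N) (u : 'rV[R]_N) : 'rV[R]_M :=
  (partial i (xi i) u + \sum_(k < N | k != i) beta k i u *: xi k u)^T.

From HB Require Import structures.
From mathcomp Require Import all_boot all_order all_algebra.
From mathcomp Require Import all_classical all_reals all_analysis.
Import Order.TTheory GRing.Theory Num.Theory.
Import numFieldNormedType.Exports.
Local Open Scope classical_set_scope.
Local Open Scope ring_scope.

(* By the product rule and the equations for the [xi_k], [zeta_k] with k <> i,
   d/du_i of sum_k xi_k zeta_k^T equals
     xi_i (d zeta_i/du_i)^T + (d xi_i/du_i) zeta_i^T
       + sum_(k <> i) beta_ki (xi_i zeta_k^T + xi_k zeta_i^T),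
   which is xi_i zeta^*_i + (zeta_i xi^*_i)^T, i.e. the derivative of
   Omega(xi, zeta^* ) + Omega(zeta, xi^* )^T. *)

Section MatrixDerive.
Context {R : realType} {V : normedModType R}.

Lemma derive_mxE {m n : nat} (A : V -> 'M[R]_(m, n)) t v i j :
  derivable A t v -> 'D_v A t i j = 'D_v (fun x => A x i j) t.
Proof. by move=> dA; rewrite derive_mx // mxE. Qed.

Lemma trmx_fun_entry {m n : nat} (A : V -> 'M[R]_(m, n)) i j :
  (fun x => (A x)^T i j) = (fun x => A x j i).
Proof. by apply/funext => x; rewrite mxE. Qed.

Lemma derivable_trmx {m n : nat} (A : V -> 'M[R]_(m, n)) t v :
  derivable A t v -> derivable (fun x => (A x)^T) t v.
Proof.
by move=> /derivable_mxP dA; apply/derivable_mxP => i j; rewrite trmx_fun_entry.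
Qed.

Lemma derive_trmx {m n : nat} (A : V -> 'M[R]_(m, n)) t v :
  derivable A t v -> 'D_v (fun x => (A x)^T) t = ('D_v A t)^T.
Proof.
move=> dA; apply/matrixP => i j.
by rewrite mxE !derive_mxE // ?trmx_fun_entry //; exact: derivable_trmx.
Qed.

Lemma mulmx_fun_entry {m n p : nat}
    (A : V -> 'M[R]_(m, n)) (B : V -> 'M[R]_(n, p)) i j :
  (fun x => (A x *m B x) i j) = \sum_(k < n) (fun x => A x i k * B x k j).
Proof. by apply/funext => x; rewrite mxE fct_sumE. Qed.

Lemma derivable_mulmx {m n p : nat}
    (A : V -> 'M[R]_(m, n)) (B : V -> 'M[R]_(n, p)) t v :
  derivable A t v -> derivable B t v -> derivable (fun x => A x *m B x) t v.
Proof.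
move=> /derivable_mxP dA /derivable_mxP dB; apply/derivable_mxP => i j.
by rewrite mulmx_fun_entry; apply: derivable_sum => k; exact: derivableM.
Qed.

Lemma derive_mulmx {m n p : nat}
    (A : V -> 'M[R]_(m, n)) (B : V -> 'M[R]_(n, p)) t v :
  derivable A t v -> derivable B t v ->
  'D_v (fun x => A x *m B x) t = 'D_v A t *m B t + A t *m 'D_v B t.
Proof.
move=> dA dB; have /derivable_mxP dAij := dA; have /derivable_mxP dBij := dB.
apply/matrixP => i j; rewrite derive_mxE; last exact: derivable_mulmx.
rewrite mulmx_fun_entry derive_sum; last by move=> k; exact: derivableM.
rewrite !mxE -big_split; apply: eq_bigr => k _ /=.
by rewrite deriveM // !derive_mxE // [LHS]addrC; congr (_ + _); exact: mulrC.
Qed.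

Lemma outer_sum_fun_sum {n m p : nat}
    (x : 'I_n -> V -> 'cV[R]_m) (z : 'I_n -> V -> 'cV[R]_p) :
  (fun s => \sum_(k < n) x k s *m (z k s)^T) = \sum_(k < n) (fun s => x k s *m (z k s)^T).
Proof. by apply/funext => s; rewrite fct_sumE. Qed.

Lemma derivable_outer_sum {n m p : nat}
    (x : 'I_n -> V -> 'cV[R]_m) (z : 'I_n -> V -> 'cV[R]_p) t v :
  (forall k, derivable (x k) t v) -> (forall k, derivable (z k) t v) ->
  derivable (fun s => \sum_(k < n) x k s *m (z k s)^T) t v.
Proof.
move=> dx dz; rewrite outer_sum_fun_sum; apply: derivable_sum => k.
by apply: derivable_mulmx => //; exact: derivable_trmx.
Qed.

Lemma derive_outer_sum {n m p : nat}
    (x : 'I_n -> V -> 'cV[R]_m) (z : 'I_n -> V -> 'cV[R]_p) t v :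
  (forall k, derivable (x k) t v) -> (forall k, derivable (z k) t v) ->
  'D_v (fun s => \sum_(k < n) x k s *m (z k s)^T) t
  = \sum_(k < n) ('D_v (x k) t *m (z k t)^T + x k t *m ('D_v (z k) t)^T).
Proof.
move=> dx dz; rewrite outer_sum_fun_sum derive_sum => [|k]; last first.
  by apply: derivable_mulmx => //; exact: derivable_trmx.
apply: eq_bigr => k _.
by rewrite derive_mulmx ?derive_trmx //; exact: derivable_trmx.
Qed.

End MatrixDerive.

Lemma smooth_on_derivable {R : realType} {N : nat} {W : normedModType R}
    (D : set 'rV[R]_N) (f : 'rV[R]_N -> W) u v :
  smooth_on D f -> D u -> derivable f u v.
Proof. by move=> sf Du; apply: diff_derivable; exact: (sf [::] u Du). Qed.

Lemma outer_star_identity {R : comPzRingType} {N m n : nat} (i : 'I_N)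
    (b : 'I_N -> R) (x dx : 'I_N -> 'cV[R]_m) (z dz : 'I_N -> 'cV[R]_n) :
  (forall k, k != i -> dx k = b k *: x i) ->
  (forall k, k != i -> dz k = b k *: z i) ->
  x i *m (dz i + \sum_(k < N | k != i) b k *: z k)^T
  + (z i *m (dx i + \sum_(k < N | k != i) b k *: x k)^T)^T
  = \sum_(k < N) (dx k *m (z k)^T + x k *m (dz k)^T).
Proof.
move=> hdx hdz; rewrite [RHS](bigD1 i) //=.
under [in RHS]eq_bigr => k ki do rewrite (hdx k ki) (hdz k ki).
rewrite trmx_mul trmxK linearD linear_sum /= mulmxDr mulmxDl mulmx_sumr mulmx_suml.
rewrite addrACA big_split /=; congr (_ + _); first exact: addrC.
by congr (_ + _); apply: eq_bigr => k _; rewrite linearZ /= -scalemxAr scalemxAl.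
Qed.

Theorem lemma2 (R : realType) (N M L : nat) (D : set 'rV[R]_N) (hD : open D)
  (beta : 'I_N -> 'I_N -> 'rV[R]_N -> R)
  (xi : 'I_N -> 'rV[R]_N -> 'cV[R]_M) (zeta : 'I_N -> 'rV[R]_N -> 'cV[R]_L)
  (OmXZ : 'rV[R]_N -> 'M[R]_(M, L)) (OmZX : 'rV[R]_N -> 'M[R]_(L, M))
  (sbeta : forall i j, i != j -> smooth_on D (beta i j))
  (sxi : forall i, smooth_on D (xi i)) (szeta : forall i, smooth_on D (zeta i))
  (sOmXZ : smooth_on D OmXZ) (sOmZX : smooth_on D OmZX)
  (lame1 : forall i j k, i != j -> j != k -> i != k -> forall u, D u ->
     partial k (beta i j) u = beta i k u * beta k j u)
  (lame2 : forall i j, i != j -> forall u, D u ->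
     partial i (beta i j) u + partial j (beta j i) u
     + \sum_(k < N | (k != i) && (k != j)) beta k i u * beta k j u = 0)
  (hxi : forall i j, i != j -> forall u, D u ->
     partial i (xi j) u = beta j i u *: xi i u)
  (hzeta : forall i j, i != j -> forall u, D u ->
     partial i (zeta j) u = beta j i u *: zeta i u)
  (hOmXZ : forall i u, D u ->
     partial i OmXZ u = xi i u *m starv beta zeta i u)
  (hOmZX : forall i u, D u ->
     partial i OmZX u = zeta i u *m starv beta xi i u) :
  forall (i : 'I_N) (u : 'rV[R]_N), D u ->
    partial i (fun v => OmXZ v + (OmZX v)^T
                        - \sum_(k < N) xi k v *m (zeta k v)^T) u = 0.
Proof.
move=> i u Du; rewrite /partial in hxi hzeta hOmXZ hOmZX *.
have du (W : normedModType R) (f : 'rV[R]_N -> W) :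
    smooth_on D f -> derivable f u (ev i).
  by move=> sf; exact: smooth_on_derivable sf Du.
have dxi k := du _ _ (sxi k); have dzeta k := du _ _ (szeta k).
have dOmXZ := du _ _ sOmXZ; have dOmZX := du _ _ sOmZX.
have dOmZXt : derivable (fun v => (OmZX v)^T) u (ev i) by exact: derivable_trmx.
change ('D_(ev i) (OmXZ + (fun v => (OmZX v)^T)
                   - (fun v => \sum_(k < N) xi k v *m (zeta k v)^T)) u = 0).
rewrite deriveB; [|exact: derivableD|exact: derivable_outer_sum].
rewrite deriveD // derive_trmx // derive_outer_sum //.
rewrite hOmXZ // hOmZX // /starv; apply/eqP; rewrite subr_eq0; apply/eqP.
by apply: outer_star_identity => k ki; [apply: hxi | apply: hzeta]; rewrite // eq_sym.
Qed.
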